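(* Let $\mathfrak s=\mathfrak{sl}(2,\mathbb C)$ with $h,e$ and Cartan involution $\theta$ such that $[e,-\theta e]=h$, $\theta h=-h$. Put $y=e-\theta e$, $t=i(e+\theta e)$, $Z=h+iy$, $\overline Z=h-iy$, $\mathfrak a=\mathbb Ch$, $\mathfrak k=\mathbb Ct$, $\mathfrak n=\mathbb Ce$, and let $Q:U(\mathfrak s)=U(\mathfrak a)U(\mathfrak k)\oplus\mathfrak nU(\mathfrak s)\to U(\mathfrak a)U(\mathfrak k)$ be the projection onto the first summand, where $U(\mathfrak a)U(\mathfrak k)$ is identified with the polynomial algebra $\mathbb C[h,t]$ via $h^at^b\mapsto h^at^b$. Then for every integer $l\ge1$ (powers taken in $U(\mathfrak s)$) $$Q(Z^l)=\prod_{j=0}^{l-1}(h+2j-t),\qquad Q(\overline Z^{\,l})=\prod_{j=0}^{l-1}(h+2j+t).$$ *)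

From HB Require Import structures.
From mathcomp Require Import all_boot all_order all_algebra.
Set Implicit Arguments. Unset Strict Implicit. Unset Printing Implicit Defensive.
Import Order.TTheory GRing.Theory Num.Theory.
Local Open Scope ring_scope.

Definition comm_br (R : pzRingType) (x y : R) : R := x * y - y * x.

(* The polynomial algebra C[h,t], represented as {poly {poly C}}:
   the outer variable is t, coefficients are polynomials in h. *)
Definition hvar (C : nzRingType) : {poly {poly C}} := ('X)%:P.
Definition tvar (C : nzRingType) : {poly {poly C}} := 'X.

Definition ht_embed (C : comNzRingType) (A : algType C) (h t : A)
    (p : {poly {poly C}}) : A :=
  \sum_(b < size p) \sum_(a < size p`_b) (p`_b)`_a *: (h ^+ a * t ^+ b).

From HB Require Import structures.
From mathcomp Require Import all_boot all_order all_algebra ring.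
Set Implicit Arguments. Unset Strict Implicit. Unset Printing Implicit Defensive.
Import Order.TTheory GRing.Theory Num.Theory.
Local Open Scope ring_scope.

(* Work modulo the right ideal [e A]. Since [h e = e (h + 2)], left
   multiplication by any polynomial in [h] respects congruences. For
   [s = 1, -1] the element [W = h + s i y] (that is, [Z] and [Zb]) satisfies
   [[t, W] = -2s W], i.e. [t W = W (t - 2s)], and [W = h - s t] modulo [e A].
   So if [W^l] is congruent to the normal-ordered [P(h, t)], then moving [W]
   left through [P(h, t)] shows that [W^(l+1)] is congruent to
   [(h - s t) P(h, t - 2s)]; iterating produces the factors [h + 2j - s t]. *)

Section HtEval.
Variables (C : comNzRingType) (A : algType C) (h t : A).

Definition ht_eval (p : {poly {poly C}}) : A := (map_poly (horner_alg h) p).[t].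

Lemma horner_algE (c : {poly C}) :
  horner_alg h c = \sum_(a < size c) c`_a *: h ^+ a.
Proof.
rewrite /horner_alg /horner_morph (@horner_coef_wide _ (size c));
  last exact: size_poly.
by apply: eq_bigr => i _; rewrite coef_map /= mulr_algl.
Qed.

Lemma ht_embedE p : ht_embed h t p = ht_eval p.
Proof.
rewrite /ht_eval (@horner_coef_wide _ (size p)); last exact: size_poly.
apply: eq_bigr => b _; rewrite coef_map /= horner_algE big_distrl /=.
by apply: eq_bigr => a _; rewrite scalerAl.
Qed.

Lemma ht_evalD p q : ht_eval (p + q) = ht_eval p + ht_eval q.
Proof. by rewrite /ht_eval rmorphD hornerD. Qed.

Lemma ht_evalB p q : ht_eval (p - q) = ht_eval p - ht_eval q.
Proof. by rewrite /ht_eval rmorphB hornerD hornerN. Qed.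

Lemma ht_evalMX p : ht_eval (p * 'X) = ht_eval p * t.
Proof. by rewrite /ht_eval rmorphM /= map_polyX hornerMX. Qed.

Lemma ht_evalCM c p : ht_eval (c%:P * p) = horner_alg h c * ht_eval p.
Proof. by rewrite /ht_eval rmorphM /= map_polyC hornerCM. Qed.

Lemma ht_evalC c : ht_eval c%:P = horner_alg h c.
Proof. by rewrite /ht_eval map_polyC hornerC. Qed.

Lemma ht_evalM_XsubC p (d : C) :
  ht_eval (p * ('X - d%:P%:P)) = ht_eval p * (t - d%:A).
Proof.
rewrite mulrBr ht_evalB ht_evalMX mulrC ht_evalCM horner_algC.
by rewrite mulrBr mulr_algl mulr_algr.
Qed.

Lemma ht_eval_hsubt (s : C) :
  ht_eval (hvar C - s%:P%:P * tvar C) = h - s *: t.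
Proof.
rewrite /hvar ht_evalB ht_evalCM !ht_evalC horner_algC horner_algX mulr_algl.
by rewrite /ht_eval /tvar map_polyX hornerX.
Qed.

End HtEval.

Section EqModRightIdeal.
Variables (R : pzRingType) (e : R).

Definition eqmod (x y : R) : Prop := exists u, x - y = e * u.

Lemma eqmod_refl x : eqmod x x.
Proof. by exists 0; rewrite subrr mulr0. Qed.

Lemma eqmod_trans y x z : eqmod x y -> eqmod y z -> eqmod x z.
Proof.
by move=> [u Hu] [v Hv]; exists (u + v); rewrite mulrDr -Hu -Hv addrA subrK.
Qed.

Lemma eqmodD x y x' y' : eqmod x y -> eqmod x' y' -> eqmod (x + x') (y + y').
Proof.
by move=> [u Hu] [v Hv]; exists (u + v); rewrite mulrDr -Hu -Hv opprD addrACA.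
Qed.

Lemma eqmodMr z x y : eqmod x y -> eqmod (x * z) (y * z).
Proof. by move=> [u Hu]; exists (u * z); rewrite -mulrBl Hu mulrA. Qed.

Lemma eqmodMl a x y : (exists w, a * e = e * w) -> eqmod x y ->
  eqmod (a * x) (a * y).
Proof.
by move=> [w Hw] [u Hu]; exists (w * u); rewrite -mulrBr Hu mulrA Hw mulrA.
Qed.

End EqModRightIdeal.

Section CommBr.
Variables (C : comNzRingType) (A : algType C).
Implicit Types x y z : A.

Lemma comm_brDl x y z : comm_br (x + y) z = comm_br x z + comm_br y z.
Proof. by rewrite /comm_br mulrDl mulrDr opprD addrACA. Qed.

Lemma comm_brDr x y z : comm_br z (x + y) = comm_br z x + comm_br z y.
Proof. by rewrite /comm_br mulrDl mulrDr opprD addrACA. Qed.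

Lemma comm_brNr x y : comm_br x (- y) = - comm_br x y.
Proof. by rewrite /comm_br mulrN mulNr opprK opprB addrC. Qed.

Lemma comm_brZl k x y : comm_br (k *: x) y = k *: comm_br x y.
Proof. by rewrite /comm_br scalerBr scalerAl scalerAr. Qed.

Lemma comm_brZr k x y : comm_br x (k *: y) = k *: comm_br x y.
Proof. by rewrite /comm_br -scalerAl -scalerAr scalerBr. Qed.

Lemma comm_brC x y : comm_br x y = - comm_br y x.
Proof. by rewrite /comm_br opprB. Qed.

Lemma comm_brxx x : comm_br x x = 0.
Proof. by rewrite /comm_br subrr. Qed.

Lemma mul_comm_br_eigen x w (d : C) :
  comm_br x w = - (d *: w) -> x * w = w * (x - d%:A).
Proof.
by move=> Hxw; rewrite mulrBr mulr_algr -Hxw /comm_br addrC subrK.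
Qed.

End CommBr.

Section PowerCongruence.
Variables (C : comNzRingType) (A : algType C) (h t e W : A) (s d : C).
Hypothesis h_mul_e : exists w, h * e = e * w.
Hypothesis W_eqmod : eqmod e W (h - s *: t).
Hypothesis t_mulW : t * W = W * (t - d%:A).

Lemma horner_alg_mul_e (c : {poly C}) : exists w, horner_alg h c * e = e * w.
Proof.
have [w Hw] := h_mul_e.
elim/poly_ind: c => [|c a [u Hu]]; first by exists 0; rewrite rmorph0 mul0r mulr0.
exists (u * w + a%:A).
rewrite rmorphD rmorphM /= horner_algX horner_algC mulrDl -mulrA Hw mulrA Hu.
by rewrite mulrDr -mulrA mulr_algl mulr_algr.
Qed.

Definition mulW_poly (p : {poly {poly C}}) : {poly {poly C}} :=
  (hvar C - s%:P%:P * tvar C) * (p \Po (tvar C - d%:P%:P)).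

Lemma ht_eval_mulW p : eqmod e (ht_eval h t p * W) (ht_eval h t (mulW_poly p)).
Proof.
elim/poly_ind: p => [|p c IHp].
  by rewrite /mulW_poly comp_polyC mulr0 /ht_eval !rmorph0 horner0 mul0r;
    exact: eqmod_refl.
have -> : mulW_poly (p * 'X + c%:P) =
    mulW_poly p * ('X - d%:P%:P) + c%:P * (hvar C - s%:P%:P * tvar C).
  by rewrite /mulW_poly /tvar comp_polyD comp_polyM comp_polyX comp_polyC; ring.
rewrite !ht_evalD ht_evalMX ht_evalC mulrDl -mulrA t_mulW mulrA.
rewrite ht_evalM_XsubC ht_evalCM ht_eval_hsubt.
apply: eqmodD; first exact: eqmodMr.
by apply: eqmodMl; [exact: horner_alg_mul_e | exact: W_eqmod].
Qed.

Definition ht_prod (l : nat) : {poly {poly C}} :=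
  \prod_(j < l) (hvar C + (j%:R * (s * d))%:P%:P - s%:P%:P * tvar C).

Lemma mulW_poly_prod l : mulW_poly (ht_prod l) = ht_prod l.+1.
Proof.
rewrite /mulW_poly /ht_prod rmorph_prod big_ord_recl /=.
congr (_ * _); first by rewrite mul0r !polyC0 addr0.
apply: eq_bigr => j _.
rewrite /hvar /tvar comp_polyB comp_polyD comp_polyM !comp_polyC comp_polyX.
by rewrite /bump add1n mulrS mulrDl mul1r !polyCD; ring.
Qed.

Lemma eqmod_expW l : eqmod e (W ^+ l) (ht_eval h t (ht_prod l)).
Proof.
elim: l => [|l IHl].
  rewrite expr0 /ht_prod big_ord0 ht_evalC horner_algC scale1r.
  exact: eqmod_refl.
rewrite exprSr -mulW_poly_prod.
exact: eqmod_trans (eqmodMr _ IHl) (ht_eval_mulW _).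
Qed.

End PowerCongruence.

Section Sl2.
Variables (C : numClosedFieldType) (A : algType C) (h e te : A).
Hypotheses (Hhe : comm_br h e = e *+ 2) (Hhte : comm_br h te = - (te *+ 2))
  (Hete : comm_br e (- te) = h).

Local Notation y := (e - te).
Local Notation t := ('i *: (e + te)).

Lemma sl2_h_mul_e : h * e = e * (h + 2%:R).
Proof. by rewrite mulrDr mulr_natr -Hhe /comm_br addrC subrK. Qed.

Lemma comm_br_t_h : comm_br t h = - ('i *: y *+ 2).
Proof.
rewrite comm_brZl comm_brDl (comm_brC e) (comm_brC te) Hhe Hhte opprK.
by rewrite scalerMnr -scalerN mulrnBl opprB addrC.
Qed.

Lemma comm_br_t_y : comm_br t y = 'i *: h *+ 2.
Proof.
have comm_br_te_e : comm_br te e = h by rewrite comm_brC -comm_brNr.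
rewrite comm_brZl !comm_brDl !comm_brDr Hete comm_br_te_e comm_brNr !comm_brxx.
by rewrite add0r subr0 scalerMnr mulr2n.
Qed.

Lemma comm_br_t_W (s : C) : s * s = 1 ->
  comm_br t (h + (s * 'i) *: y) = - ((s *+ 2) *: (h + (s * 'i) *: y)).
Proof.
move=> ss; rewrite comm_brDr comm_brZr comm_br_t_h comm_br_t_y.
move: (e - te) => v.
rewrite !scalerMnl scalerDr !scalerA opprD -!scaleNr addrC.
by congr (_ *: _ + _ *: _); ring: (@mulCii C) ss.
Qed.

Lemma sl2_W_eqmod (s : C) : eqmod e (h + (s * 'i) *: y) (h - s *: t).
Proof.
exists ((s * 'i) *+ 2)%:A; rewrite mulr_algr opprB addrC addrA subrK.
by rewrite !scalerA scalerDr scalerBr addrACA subrr addr0 -mulr2n scalerMnl.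
Qed.

Lemma sl2_expW (s : C) : s * s = 1 -> forall l,
  eqmod e ((h + (s * 'i) *: y) ^+ l) (ht_eval h t
    (\prod_(j < l) (hvar C + (2 * j)%:R%:P%:P - s%:P%:P * tvar C))).
Proof.
move=> ss l.
rewrite (_ : \prod_(j < l) _ = ht_prod s (s *+ 2) l).
  exact: eqmod_expW (ex_intro _ _ sl2_h_mul_e) (sl2_W_eqmod s)
    (mul_comm_br_eigen (comm_br_t_W ss)) l.
by apply: eq_bigr => j _; rewrite mulrnAr ss natrM mulrC.
Qed.

End Sl2.

Theorem theorem6p3 (C : numClosedFieldType) (A : algType C) (h e te : A)
    (Hhe : comm_br h e = e *+ 2)
    (Hhte : comm_br h te = - (te *+ 2))
    (Hete : comm_br e (- te) = h)
    (l : nat) (Hl : (1 <= l)%N) :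
  let y := e - te in
  let t := 'i *: (e + te) in
  let Z := h + 'i *: y in
  let Zb := h - 'i *: y in
  (exists u : A, Z ^+ l - ht_embed h t
      (\prod_(j < l) (hvar C + ((2 * j)%:R)%:P%:P - tvar C)) = e * u) /\
  (exists u : A, Zb ^+ l - ht_embed h t
      (\prod_(j < l) (hvar C + ((2 * j)%:R)%:P%:P + tvar C)) = e * u).
Proof.
move=> y t Z Zb; rewrite !ht_embedE.
have expW := sl2_expW Hhe Hhte Hete.
split.
- have [u Hu] := expW 1 (mulr1 1) l; exists u; rewrite -Hu mul1r.
  by congr (_ - ht_eval _ _ _); apply: eq_bigr => j _; rewrite polyC1 mul1r.
- have sqrN1 : (-1 : C) * -1 = 1 by rewrite mulrNN mulr1.
  have [u Hu] := expW (-1) sqrN1 l; exists u.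
  rewrite -Hu mulN1r scaleNr.
  congr (_ - ht_eval _ _ _); apply: eq_bigr => j _.
  by rewrite !polyCN !polyC1 mulN1r opprK.
Qed.
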